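(* Let $\alpha\in(0,1)$ and $c>0$, and let $K_\alpha$ be a class of finite simple undirected graphs that is closed under taking subgraphs and such that every graph $H\in K_\alpha$ with $h$ vertices has a balanced separator of cardinality at most $c\,h^{\alpha}$. Then there is a constant $C$ depending only on $\alpha$ and $c$ such that for every $G\in K_\alpha$ with $n\ge 1$ vertices, every nested dissection order $\pi$ of $G$ and every vertex $v$, the search space $\mathrm{SS}(v)$ in $G_\pi^\wedge$ has at most $C\,n^{\alpha}$ vertices.
   Context: Let $G=(V,E)$ be a finite simple undirected graph with $n=|V|$ vertices. A vertex order is a bijection $\pi:\{1,\dots,n\}\to V$; the rank of $v$ is $\pi^{-1}(v)$. Contracting a vertex $v$ in a graph means deleting $v$ and its incident edges and adding an edge between every pair of former neighbors of $v$ that are not already adjacent. The core graph $G_{\pi,i}$ is obtained from $G$ by contracting $\pi(1),\dots,\pi(i-1)$ in this order. $G_\pi^*$ is the graph on $V$ whose edge set is the union of the edge sets of all $G_{\pi,i}$, $i=1,\dots,n$ (i.e. $G$ together with all edges inserted during the contractions). $G_\pi^\wedge$ is the directed graph obtained from $G_\pi^*$ by orienting every edge from its endpoint of lower rank to its endpoint of higher rank. The search space $\mathrm{SS}(v)$ is the subgraph of $G_\pi^\wedge$ induced by the set of vertices reachable from $v$ in $G_\pi^\wedge$ (including $v$). A balanced separator of a graph with vertex set $V$, $|V|=n$, is a set $S\subseteq V$ such that $V\setminus S$ can be partitioned into sets $A,B$ (possibly empty) with no edge between $A$ and $B$ and $|A|,|B|\le 2n/3$. A nested dissection order of $G$ is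 defined recursively: if $G$ is empty it is the empty order; otherwise choose a balanced separator $S$ of $G$ of minimum cardinality with corresponding parts $A,B$, give the vertices of $S$ the ranks $n-|S|+1,\dots,n$ in arbitrary order, give the vertices of $A$ the ranks $1,\dots,|A|$ according to a nested dissection order of $G[A]$, and the vertices of $B$ the ranks $|A|+1,\dots,|A|+|B|$ according to a nested dissection order of $G[B]$. *)

From Stdlib Require Import Reals.
From mathcomp Require Import all_boot.

Set Implicit Arguments.
Unset Strict Implicit.
Unset Printing Implicit Defensive.

Section Graphs.
Variable T : finType.

Definition simple_graph (e : rel T) : Prop :=
  (forall x y, e x y = e y x) /\ (forall x, e x x = false).

Definition contract (e : rel T) (v : T) : rel T :=
  fun x y => [&& x != v, y != v & (e x y || [&& x != y, e x v & e v y])].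

(* A vertex order pi : {1..n} -> V is represented by the sequence
   s = [:: pi 1; ...; pi n] with perm_eq s (enum T); the (0-based) rank of v
   is index v s. *)
Definition vertex_order (s : seq T) : Prop := perm_eq s (enum T).

(* core graph G_{pi,i+1}: contract pi(1),...,pi(i) in this order *)
Definition core (e : rel T) (s : seq T) (i : nat) : rel T :=
  foldl contract e (take i s).

Definition Gstar (e : rel T) (s : seq T) : rel T :=
  fun x y => [exists i : 'I_(size s).+1, core e s i x y].

Definition Ghat (e : rel T) (s : seq T) : rel T :=
  fun x y => Gstar e s x y && (index x s < index y s).

Definition search_space (e : rel T) (s : seq T) (v : T) : {set T} :=
  [set y | connect (Ghat e s) v y].

Definition balanced_sep_parts (e : rel T) (U S A B : {set T}) : Prop :=
  [/\ S \subset U, A :|: B = U :\: S, [disjoint A & B],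
      (forall x y, x \in A -> y \in B -> e x y = false) &
      (3 * #|A| <= 2 * #|U|) && (3 * #|B| <= 2 * #|U|)].

Definition balanced_sep (e : rel T) (U S : {set T}) : Prop :=
  exists A B, balanced_sep_parts e U S A B.

Inductive nested_dissection (e : rel T) : {set T} -> seq T -> Prop :=
| nd_empty : nested_dissection e set0 [::]
| nd_step (U S A B : {set T}) (sA sB sS : seq T) :
    U != set0 ->
    balanced_sep_parts e U S A B ->
    (forall S', balanced_sep e U S' -> #|S| <= #|S'|) ->
    nested_dissection e A sA ->
    nested_dissection e B sB ->
    perm_eq sS (enum S) ->
    nested_dissection e U (sA ++ sB ++ sS).

End Graphs.

Definition graph_class := forall T : finType, rel T -> Prop.

Definition class_of_simple_graphs (K : graph_class) : Prop :=
  forall (T : finType) (e : rel T), K T e -> simple_graph e.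

Definition is_subgraph (T' : finType) (e' : rel T') (T : finType) (e : rel T) :=
  exists f : T' -> T, injective f /\ (forall x y, e' x y -> e (f x) (f y)).

Definition subgraph_closed (K : graph_class) : Prop :=
  forall (T : finType) (e : rel T) (T' : finType) (e' : rel T'),
    K T e -> simple_graph e' -> is_subgraph e' e -> K T' e'.

From Stdlib Require Import Reals Lra.
From mathcomp Require Import all_boot.

Set Implicit Arguments.
Unset Strict Implicit.

(* Write rank(x) for the position of x in the order s.  The proof rests on one
   structural fact about contraction: if a vertex set X occupies ranks below E
   and every edge of G leaving X ends at rank >= E, then the same holds for
   every edge inserted by the contractions (a fill-in edge through the
   contracted vertex w joins two neighbours of w of rank > rank(w)).  Since the
   edges of G^wedge increase the rank, a search started inside X can leave X
   only towards ranks >= E.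

   In a nested dissection order of G[U] with separator S and parts A, B, the
   vertices of A, B and S occupy consecutive rank intervals, A and B are not
   adjacent, and S comes last.  Hence a search space started in A (resp. B)
   meets U only in A (resp. B) and S, and one started in S meets U only in S.
   This gives |SS(v) /\ U| <= |SS(v) /\ X| + |S| with X the part containing v,
   and by induction |SS(v) /\ U| <= g(|U|) for any g with
   g(a) + f(u) <= g(u) whenever 3a <= 2u, where f(u) bounds minimum balanced
   separators of u-vertex graphs.  For f(u) = c u^alpha the function
   g(u) = c / (1 - (2/3)^alpha) u^alpha works; subgraph closure of the class
   provides the separator bound for every induced subgraph G[U]. *)

Lemma connect_invariant (T : finType) (r : rel T) (P : pred T) x y :
  (forall a b, P a -> r a b -> P b) -> P x -> connect r x y -> P y.
Proof.
move=> Pstep Px /connectP [p rp ->] {y}.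
elim: p x Px rp => [|z p IHp] x Px //= /andP [rxz rp].
exact: IHp (Pstep _ _ Px rxz) rp.
Qed.

Section CoreGraphs.
Variables (T : finType) (e : rel T) (s : seq T).
Hypothesis s_uniq : uniq s.

Lemma core_step i x0 :
  i < size s -> core e s i.+1 = contract (core e s i) (nth x0 s i).
Proof. by move=> lt_i; rewrite /core (take_nth x0 lt_i) foldl_rcons. Qed.

Lemma core_stop i : size s <= i -> core e s i.+1 = core e s i.
Proof. by move=> le_si; rewrite /core !take_oversize // leqW. Qed.

Lemma core_notin i x y : core e s i x y -> x \notin take i s.
Proof.
elim: i x y => [|i IHi] x y; first by rewrite take0.
have [lt_i | le_si] := ltnP i (size s); last first.
  by rewrite core_stop // => /IHi; rewrite !take_oversize // leqW.
rewrite (core_step x lt_i) (take_nth x lt_i) => /and3P [xv _ Hxy].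
rewrite mem_rcons in_cons negb_or xv /=.
by case/orP: Hxy => [|/and3P [_ + _]]; exact: IHi.
Qed.

Lemma core_rank i x y : i < size s -> core e s i x y -> i <= index x s.
Proof.
move=> lt_i /core_notin xNs.
by rewrite -(cat_take_drop i s) index_cat (negbTE xNs) size_take lt_i leq_addr.
Qed.

Definition leaves_above (r : rel T) (X : {set T}) (E : nat) : Prop :=
  forall x y, r x y -> x \in X -> y \notin X -> E <= index y s.

Lemma leaves_above_le r X E E' :
  E' <= E -> leaves_above r X E -> leaves_above r X E'.
Proof. by move=> le_E hX x y rxy xX yX; exact: leq_trans le_E (hX x y rxy xX yX). Qed.

Lemma part_leaves_above (U S X Y : {set T}) E E' :
  E <= E' -> leaves_above e U E' -> {in S, forall x, E <= index x s} ->
  (forall x y, x \in X -> y \in Y -> e x y = false) ->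
  (forall y, (y \in U) = [|| y \in X, y \in Y | y \in S]) ->
  leaves_above e X E.
Proof.
move=> le_E eU S_high eXY memU x y exy xX yNX.
have [yU | yNU] := boolP (y \in U).
  move: yU; rewrite memU (negbTE yNX) /= => /orP [yY | /S_high //].
  by rewrite eXY in exy.
have xU : x \in U by rewrite memU xX.
exact: leq_trans le_E (eU x y exy xU yNU).
Qed.

(* A fill-in edge x-y through w = s_i with x in X and y outside
   comes from edges x-w and w-y of the previous core; w must lie in X, since
   otherwise rank(w) >= E > rank(x) >= i = rank(w). *)
Lemma core_leaves_above (X : {set T}) E :
  {in X, forall x, index x s < E} -> leaves_above e X E ->
  forall i, leaves_above (core e s i) X E.
Proof.
move=> X_low eX; elim=> [|i IHi] x y; first by rewrite /core take0; exact: eX.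
have [lt_i | le_si] := ltnP i (size s); last by rewrite core_stop //; exact: IHi.
rewrite (core_step x lt_i) => /and3P [_ _ /orP [Hxy | /and3P [_ Hxw Hwy]]] xX yX.
  exact: IHi Hxy xX yX.
have [wX | wX] := boolP (nth x s i \in X); first exact: IHi Hwy wX yX.
have := IHi _ _ Hxw xX wX; rewrite index_uniq // => le_Ei.
have := leq_trans le_Ei (core_rank lt_i Hxw).
by rewrite leqNgt X_low.
Qed.

Lemma search_space_confined (X : {set T}) E v y :
  {in X, forall x, index x s < E} -> leaves_above e X E ->
  (v \in X) || (E <= index v s) ->
  y \in search_space e s v -> (y \in X) || (E <= index y s).
Proof.
move=> X_low eX Pv; rewrite inE.
apply: (@connect_invariant _ _ (fun z => (z \in X) || (E <= index z s))) Pv => a b Pa.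
case/andP=> /existsP [i Hab] lt_ab.
case/orP: Pa => [aX | le_Ea]; last by rewrite (leq_trans le_Ea (ltnW lt_ab)) orbT.
have [//| bX] := boolP (b \in X).
by rewrite (core_leaves_above X_low eX Hab aX bX) orbT.
Qed.

Lemma search_space_split (U S X : {set T}) E v :
  {in X, forall x, index x s < E} -> leaves_above e X E ->
  (v \in X) || (E <= index v s) ->
  {in U, forall y, E <= index y s -> y \in S} ->
  #|search_space e s v :&: U| <= #|search_space e s v :&: X| + #|S|.
Proof.
move=> X_low eX Pv U_high.
apply: leq_trans (leq_card_setU _ _).1; apply: subset_leq_card.
apply/subsetP=> y /setIP [yR yU].
case/orP: (search_space_confined X_low eX Pv yR) => [yX | le_Ey].
  by rewrite in_setU in_setI yR yX.
by rewrite in_setU U_high ?orbT.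
Qed.

End CoreGraphs.

Section NestedDissection.
Variables (T : finType) (e : rel T).

Lemma sep_parts_mem (U S A B : {set T}) : balanced_sep_parts e U S A B ->
  [/\ forall x, (x \in U) = [|| x \in A, x \in B | x \in S],
      forall x, x \in A -> (x \notin B) && (x \notin S) &
      forall x, x \in B -> x \notin S].
Proof.
case=> SU AB_US AB_dis _ _.
have inAB x : (x \in A) || (x \in B) = (x \in U) && (x \notin S).
  by rewrite -in_setU AB_US in_setD andbC.
split=> [x | x xA | x xB].
- have [xS | xNS] := boolP (x \in S); first by rewrite (subsetP SU) ?orbT.
  by rewrite orbF inAB xNS andbT.
- by rewrite (disjointFr AB_dis xA); have := inAB x; rewrite xA => /esym/andP [].
- by have := inAB x; rewrite xB orbT => /esym/andP [].
Qed.

Lemma nd_uniq_mem U t : nested_dissection e U t -> uniq t /\ t =i U.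
Proof.
elim=> [|{}U S A B sA sB sS _ sepU _ _ [uA mA] _ [uB mB] pS].
  by split=> // x; rewrite in_set0.
have [memU disA disB] := sep_parts_mem sepU.
have mS : sS =i S by move=> x; rewrite (perm_mem pS) mem_enum.
split; last by move=> x; rewrite memU !mem_cat mA mB mS.
rewrite !cat_uniq uA uB (perm_uniq pS) enum_uniq /= andbT.
apply/andP; split; apply/hasPn=> x; rewrite ?mem_cat ?mA ?mB ?mS.
  by case/orP=> [xB | xS]; apply/negP=> /disA /andP []; rewrite ?xB ?xS.
by move=> xS; apply/negP=> /disB; rewrite xS.
Qed.

End NestedDissection.

Lemma index_segment (T : eqType) (p t q : seq T) x : uniq (p ++ t ++ q) ->
  x \in t -> size p <= index x (p ++ t ++ q) < size p + size t.
Proof.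
rewrite cat_uniq => /and3P [_ /hasPn ptq _] xt.
have xNp : x \notin p by apply: ptq; rewrite mem_cat xt.
by rewrite index_cat (negbTE xNp) index_cat xt leq_addr ltn_add2l index_mem.
Qed.

Lemma dissection_ranks (T : finType) (e : rel T) (s p q sA sB sS : seq T)
    (A B S : {set T}) :
  uniq s -> s = p ++ (sA ++ sB ++ sS) ++ q ->
  nested_dissection e A sA -> nested_dissection e B sB -> perm_eq sS (enum S) ->
  [/\ {in A, forall x, index x s < size p + size sA},
      {in B, forall x, size p + size sA <= index x s < size p + size sA + size sB} &
      {in S, forall x, size p + size sA + size sB <= index x s}].
Proof.
move=> s_uniq s_def ndA ndB pS.
have rank_seg (p' t' q' : seq T) x : s = p' ++ t' ++ q' -> x \in t' ->
    size p' <= index x s < size p' + size t'.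
  by move=> s_eq; rewrite s_eq; apply: index_segment; rewrite -s_eq.
split=> x.
- rewrite -(nd_uniq_mem ndA).2 => xA.
  have s_eq : s = p ++ sA ++ (sB ++ sS ++ q) by rewrite s_def -!catA.
  by case/andP: (rank_seg _ _ _ x s_eq xA).
- rewrite -(nd_uniq_mem ndB).2 -size_cat; apply: rank_seg.
  by rewrite s_def -!catA.
- rewrite -mem_enum -(perm_mem pS) => xS.
  have s_eq : s = (p ++ sA ++ sB) ++ sS ++ q by rewrite s_def -!catA.
  have /andP [+ _] := rank_seg _ _ _ x s_eq xS.
  by rewrite !size_cat addnA.
Qed.

Section SearchSpaceBound.
Variables (T : finType) (e : rel T) (s : seq T) (f g : nat -> R).
Hypothesis e_sym : symmetric e.
Hypothesis s_uniq : uniq s.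
Hypothesis sep_bound : forall U : {set T},
  exists S, balanced_sep e U S /\ Rle (INR #|S|) (f #|U|).
Hypothesis g_rec : forall a u, 0 < a -> 3 * a <= 2 * u ->
  Rle (Rplus (g a) (f u)) (g u).
Hypothesis f_le_g : forall u, Rle (f u) (g u).

Lemma min_sep_bound (U S : {set T}) :
  (forall S', balanced_sep e U S' -> #|S| <= #|S'|) -> Rle (INR #|S|) (f #|U|).
Proof.
move=> S_min; have [S' [sepS' S'_f]] := sep_bound U.
by apply: Rle_trans S'_f; apply/le_INR/leP; exact: S_min.
Qed.

Lemma nd_search_bound U t : nested_dissection e U t ->
  forall p q, s = p ++ t ++ q -> leaves_above s e U (size p + size t) ->
  forall v, v \in U -> Rle (INR #|search_space e s v :&: U|) (g #|U|).
Proof.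
elim=> [|{}U S A B sA sB sS _ sepU S_min ndA IHA ndB IHB pS] p q s_def eU v vU;
  first by rewrite in_set0 in vU.
have [memU _ _] := sep_parts_mem sepU.
have [_ _ _ eAB /andP [cardA cardB]] := sepU.
have [rankA rankB rankS] := dissection_ranks s_uniq s_def ndA ndB pS.
set endA := size p + size sA in rankA rankB; set endB := endA + size sB in rankB rankS.
have le_endB : endB <= size p + size (sA ++ sB ++ sS).
  by rewrite !size_cat !addnA leq_addr.
have high_S : {in U, forall y, endB <= index y s -> y \in S}.
  move=> y; rewrite memU => /or3P [yA | yB | //]; rewrite leqNgt.
    by rewrite (leq_trans (rankA y yA)) ?leq_addr.
  by case/andP: (rankB y yB) => _ ->.
(* Edges leaving a part go to the separator or out of U, hence above endB. *)
have leavesA : leaves_above s e A endB.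
  exact: part_leaves_above le_endB eU rankS eAB memU.
have leavesB : leaves_above s e B endB.
  have eBA x y : x \in B -> y \in A -> e x y = false.
    by move=> xB yA; rewrite e_sym eAB.
  apply: part_leaves_above le_endB eU rankS eBA _ => y.
  by rewrite memU; case: (y \in A); case: (y \in B).
(* The search space meets U inside the part X containing v, plus S. *)
have finish (X : {set T}) :
    {in X, forall x, index x s < endB} -> leaves_above s e X endB ->
    (v \in X) || (endB <= index v s) ->
    Rle (Rplus (INR #|search_space e s v :&: X|) (f #|U|)) (g #|U|) ->
    Rle (INR #|search_space e s v :&: U|) (g #|U|).
  move=> X_low eX Pv bound; apply: Rle_trans bound.
  apply: Rle_trans (le_INR _ _ (leP (search_space_split s_uniq X_low eX Pv high_S))) _.
  by rewrite plus_INR; apply: Rplus_le_compat_l; exact: min_sep_bound.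
move: vU; rewrite memU => /or3P [vA | vB | vS].
- apply: (finish A _ leavesA).
  + by move=> x /rankA /leq_trans ->; rewrite ?leq_addr.
  + by rewrite vA.
  + apply: Rle_trans (g_rec _ cardA); last by apply/card_gt0P; exists v.
    apply: Rplus_le_compat_r; apply: (IHA p (sB ++ sS ++ q)) => //.
      by rewrite s_def -!catA.
    exact: leaves_above_le (leq_addr _ _) leavesA.
- apply: (finish B _ leavesB).
  + by move=> x /rankB /andP [].
  + by rewrite vB.
  + apply: Rle_trans (g_rec _ cardB); last by apply/card_gt0P; exists v.
    apply: Rplus_le_compat_r; apply: (IHB (p ++ sA) (sS ++ q)) => //.
      by rewrite s_def -!catA.
    by rewrite size_cat.
- apply: (finish set0) => [x | x y _ | | ]; rewrite ?in_set0 //.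
  + exact: rankS.
  + by rewrite setI0 cards0 /= Rplus_0_l.
Qed.

End SearchSpaceBound.

Section DissectionConstant.
Local Open Scope R_scope.
Variables alpha c : R.
Hypothesis alpha_gt0 : 0 < alpha.
Hypothesis c_ge0 : 0 <= c.

(* The geometric series c * (1 + q + q^2 + ...) with q = (2/3)^alpha, the
   ratio by which u^alpha shrinks from a graph to one of its parts. *)
Definition nd_const : R := c / (1 - Rpower (2/3) alpha).

Lemma two_thirds_pow_lt1 : Rpower (2/3) alpha < 1.
Proof.
have one_pow : Rpower 1 alpha = 1 by rewrite /Rpower ln_1 Rmult_0_r exp_0.
by rewrite -one_pow; apply: Rlt_Rpower_l => //; lra.
Qed.

Lemma nd_const_ge0 : 0 <= nd_const.
Proof.
have := two_thirds_pow_lt1; rewrite /nd_const => q_lt1.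
apply: Rmult_le_pos => //; apply/Rlt_le/Rinv_0_lt_compat; lra.
Qed.

Lemma nd_const_rec (a u : nat) : (0 < a)%N -> (3 * a <= 2 * u)%N ->
  nd_const * Rpower (INR a) alpha + c * Rpower (INR u) alpha
  <= nd_const * Rpower (INR u) alpha.
Proof.
move=> /ltP a_gt0 /leP au.
set q := Rpower (2/3) alpha.
have q_lt1 : q < 1 := two_thirds_pow_lt1.
have a_pos : 0 < INR a by apply: lt_0_INR.
have a_le : INR a <= 2/3 * INR u.
  by apply le_INR in au; rewrite !mult_INR in au; simpl in au; lra.
have shrink : Rpower (INR a) alpha <= q * Rpower (INR u) alpha.
  rewrite /q Rpower_mult_distr; try lra.
  by apply: Rle_Rpower_l; lra.
have c_eq : c = nd_const * (1 - q) by rewrite /nd_const -/q; field; lra.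
apply: Rle_trans (Rplus_le_compat_r _ _ _
  (Rmult_le_compat_l _ _ _ nd_const_ge0 shrink)) _.
by right; rewrite c_eq; ring.
Qed.

Lemma nd_const_ge_c (u : nat) :
  c * Rpower (INR u) alpha <= nd_const * Rpower (INR u) alpha.
Proof.
have q_lt1 := two_thirds_pow_lt1.
have q_pos : 0 < Rpower (2/3) alpha by apply: exp_pos.
apply: Rmult_le_compat_r; first by apply: Rlt_le; apply: exp_pos.
rewrite /nd_const -[c]Rmult_1_r /Rdiv Rmult_assoc.
apply: Rmult_le_compat_l => //; rewrite Rmult_1_l -Rinv_1.
by apply: Rinv_le_contravar; lra.
Qed.

End DissectionConstant.

Section InducedSubgraph.
Variables (T : finType) (U : {set T}).
(* The induced subgraph G[U] lives on the subtype of U. *)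
Local Notation TU := {x : T | x \in U}.

Lemma card_sub_set : #|[set: TU]| = #|U|.
Proof. by rewrite cardsT card_sig; apply: eq_card => x; rewrite inE. Qed.

Lemma val_in_val_set (X : {set TU}) y : (val y \in [set val z | z in X]) = (y \in X).
Proof. exact/mem_imset/val_inj. Qed.

Lemma sep_parts_val (e : rel T) (S A B : {set TU}) :
  balanced_sep_parts (fun a b : TU => e (val a) (val b)) [set: TU] S A B ->
  balanced_sep_parts e U [set val y | y in S] [set val y | y in A]
                         [set val y | y in B].
Proof.
case=> _ AB_S AB_dis eAB /andP [cardA cardB].
have inU (X : {set TU}) x : x \in [set val y | y in X] -> x \in U.
  by case/imsetP=> y _ ->; exact: valP.
split.
- by apply/subsetP => x /inU.
- apply/setP => x; rewrite in_setU in_setD.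
  have [xU | xNU] := boolP (x \in U); last first.
    by rewrite andbF; apply/negbTE/negP => /orP [] /inU; rewrite (negbTE xNU).
  rewrite -[x]/(val (exist _ x xU)) !val_in_val_set andbT -in_setU AB_S.
  by rewrite in_setD in_setT andbT.
- rewrite disjoint_subset; apply/subsetP => x xA; have xU := inU _ _ xA.
  move: xA; rewrite inE -[x]/(val (exist _ x xU)) !val_in_val_set => xA.
  by rewrite (disjointFr AB_dis xA).
- move=> x y /imsetP [x' x'A ->] /imsetP [y' y'B ->]; exact: eAB.
- by rewrite !card_imset; try exact: val_inj; rewrite -card_sub_set cardA cardB.
Qed.

End InducedSubgraph.

Lemma induced_sep_bound (K : graph_class) (alpha c : R) :
  class_of_simple_graphs K -> subgraph_closed K ->
  (forall (T : finType) (e : rel T), K T e ->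
     exists S : {set T}, balanced_sep e [set: T] S /\
       Rle (INR #|S|) (Rmult c (Rpower (INR #|T|) alpha))) ->
  forall (T : finType) (e : rel T), K T e -> forall U : {set T},
  exists S : {set T}, balanced_sep e U S /\
    Rle (INR #|S|) (Rmult c (Rpower (INR #|U|) alpha)).
Proof.
move=> K_simple K_sub K_sep T e KG U.
pose eU := fun a b : {x : T | x \in U} => e (val a) (val b).
have [e_sym e_irr] := K_simple _ _ KG.
have KGU : K _ eU.
  apply: (K_sub T e) => //; first by split=> [x y|x]; [exact: e_sym | exact: e_irr].
  by exists val; split; [exact: val_inj | by []].
have [S [[A [B sepS]] S_small]] := K_sep _ _ KGU.
exists [set val y | y in S]; split.
  by exists [set val y | y in A], [set val y | y in B]; exact: sep_parts_val.
by rewrite card_imset; [rewrite -(card_sub_set U) cardsT | exact: val_inj].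
Qed.

Theorem mainTheorem1 (alpha c : R) :
  Rlt 0 alpha -> Rlt alpha 1 -> Rlt 0 c ->
  exists C : R,
    forall K : graph_class,
      class_of_simple_graphs K ->
      subgraph_closed K ->
      (forall (T : finType) (e : rel T), K T e ->
         exists S : {set T}, balanced_sep e [set: T] S /\
           Rle (INR #|S|) (Rmult c (Rpower (INR #|T|) alpha))) ->
      forall (T : finType) (e : rel T), K T e -> 1 <= #|T| ->
      forall s : seq T, nested_dissection e [set: T] s ->
      forall v : T,
        Rle (INR #|search_space e s v|) (Rmult C (Rpower (INR #|T|) alpha)).
Proof.
move=> alpha_gt0 _ c_gt0; have c_ge0 := Rlt_le _ _ c_gt0.
exists (nd_const alpha c) => K K_simple K_sub K_sep T e KG _ s nd_s v.
have [e_sym _] := K_simple _ _ KG.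
have [s_uniq _] := nd_uniq_mem nd_s.
have := nd_search_bound e_sym s_uniq
  (induced_sep_bound K_simple K_sub K_sep KG)
  (fun a u a_gt0 au => nd_const_rec alpha_gt0 c_ge0 a_gt0 au)
  (nd_const_ge_c alpha_gt0 c_ge0) nd_s (p := [::]) (q := [::]).
rewrite cats0 cardsT => /(_ erefl) bound.
have no_exit : leaves_above s e [set: T] (0 + size s).
  by move=> x y _ _; rewrite in_setT.
by have := bound no_exit v (in_setT v); rewrite setIT.
Qed.
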